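(* Let $(\Sigma,\theta)$ be a Noetherian space. The tree topology on the set $T(\Sigma)$ of finite trees over $\Sigma$ is the least fixed point of the map $K$ sending a topology $\tau$ on $T(\Sigma)$ to the topology generated by the sets $\uparrow_{\le_T}U\langle V\rangle$ with $U\in\theta$ and $V$ open in $T(\Sigma)^*$ for the subword topology induced by $\tau$; moreover $K$ is a topology expander.
   Context: A finite tree over $\Sigma$ is $a\langle t_1\cdots t_n\rangle$ with $a\in\Sigma$, $n\ge0$ and $t_i$ finite trees. $\le$ is the specialisation preorder of $\theta$. For a topological space $(A,\sigma)$, the subword topology on $A^*$ is generated by $A^*U_1A^*\cdots A^*U_nA^*$ with $U_i\in\sigma$; Higman's ordering $\le^*$ on $A^*$ relative to a preorder on $A$: $u\le^*w$ iff a strictly increasing map $h$ of positions satisfies $u_i\le w_{h(i)}$. Kruskal's embedding $\le_T$ on $T(\Sigma)$: $s\le_T t$ iff, writing $t=a\langle t_1\cdots t_n\rangle$, either $s\le_T t_i$ for some $i$, or $s=b\langle s_1\cdots s_m\rangle$ with $b\le a$ and $s_1\cdots s_m\le_T^* t_1\cdots t_n$. For $U\subseteq\Sigma$, $V\subseteq T(\Sigma)^*$, $U\langle V\rangle$ is the set of trees $a\langle w\rangle$ with $a\in U$, $w\in V$; $\diamond U\langle V\rangle$ is the set of trees having a subtree in $U\langle V\rangle$. The tree topology is the coarsest topology $\tau$ on $T(\Sigma)$ such that $\diamond U\langle V\rangle$ is open for every $U\in\theta$ and every $V$ open in the subword topology on $T(\Sigma)^*$ built from $\tau$. Noetherian: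 every subset compact. A refinement function is a map from topologies on a set $X$ to topologies on $X$, monotone and preserving Noetherianity; $\tau|_H$ is the topology generated by $\{U\cap H:U\in\tau\}$; a topology expander is a refinement function $R$ with $R(\tau)|_H=R(\tau|_H)|_H$ for all Noetherian $\tau\subseteq R(\tau)$ and all $H$ closed in $\tau$. *)

From Stdlib Require Import List.
Set Implicit Arguments.

Definition topo (X : Type) := (X -> Prop) -> Prop.

Definition set_eq {X} (A B : X -> Prop) := forall x, A x <-> B x.
Definition topo_le {X} (t1 t2 : topo X) := forall U, t1 U -> t2 U.
Definition topo_eq {X} (t1 t2 : topo X) := forall U, t1 U <-> t2 U.

Definition is_topology {X} (t : topo X) : Prop :=
  t (fun _ => True) /\
  (forall A B, t A -> t B -> t (fun x => A x /\ B x)) /\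
  (forall F : (X -> Prop) -> Prop, (forall U, F U -> t U) ->
      t (fun x => exists U, F U /\ U x)).

Definition gen {X} (G : (X -> Prop) -> Prop) : topo X :=
  fun U => forall t, is_topology t -> (forall V, G V -> t V) -> t U.

Definition compact_in {X} (t : topo X) (A : X -> Prop) : Prop :=
  forall F : (X -> Prop) -> Prop, (forall U, F U -> t U) ->
    (forall x, A x -> exists U, F U /\ U x) ->
    exists l : list (X -> Prop), (forall U, In U l -> F U) /\
      (forall x, A x -> exists U, In U l /\ U x).

Definition noetherian {X} (t : topo X) : Prop :=
  forall A : X -> Prop, compact_in t A.

Definition noetherian_space {X} (t : topo X) : Prop :=
  is_topology t /\ noetherian t.

(* specialisation preorder: x <= y iff x is in the closure of {y},
   i.e. every open set containing x contains y *)
Definition spec_le {X} (t : topo X) (x y : X) : Prop :=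
  forall U, t U -> U x -> U y.

Definition closed_in {X} (t : topo X) (H : X -> Prop) : Prop :=
  t (fun x => ~ H x).

(* tau|_H : topology (on X) generated by { U /\ H : U in tau } *)
Definition restr {X} (t : topo X) (H : X -> Prop) : topo X :=
  gen (fun W => exists U, t U /\ set_eq W (fun x => U x /\ H x)).

Definition refinement_function {X} (R : topo X -> topo X) : Prop :=
  (forall t, is_topology t -> is_topology (R t)) /\
  (forall t1 t2, is_topology t1 -> is_topology t2 ->
       topo_le t1 t2 -> topo_le (R t1) (R t2)) /\
  (forall t, is_topology t -> noetherian t -> noetherian (R t)).

Definition topology_expander {X} (R : topo X -> topo X) : Prop :=
  refinement_function R /\
  forall t H, is_topology t -> noetherian t -> topo_le t (R t) ->
    closed_in t H ->
    topo_eq (restr (R t) H) (restr (R (restr t H)) H).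

Definition least_fixed_point {X} (K : topo X -> topo X) (t : topo X) : Prop :=
  is_topology t /\ topo_eq (K t) t /\
  forall t', is_topology t' -> topo_eq (K t') t' -> topo_le t t'.

(* emb r u w : there is a strictly increasing h with r (u_i) (w_{h i}) *)
Inductive emb {A B : Type} (r : A -> B -> Prop) : list A -> list B -> Prop :=
| emb_nil : forall w, emb r nil w
| emb_cons : forall a u b w, r a b -> emb r u w -> emb r (a :: u) (b :: w)
| emb_skip : forall u b w, emb r u w -> emb r u (b :: w).

Definition higman {A} (le : A -> A -> Prop) : list A -> list A -> Prop := emb le.

(* A* U1 A* ... A* Un A* *)
Definition subword_basic {A} (Us : list (A -> Prop)) : list A -> Prop :=
  emb (fun (U : A -> Prop) a => U a) Us.

Definition subword_topology {A} (s : topo A) : topo (list A) :=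
  gen (fun W => exists Us : list (A -> Prop),
          (forall U, In U Us -> s U) /\ set_eq W (subword_basic Us)).

Inductive tree (S : Type) : Type := node : S -> list (tree S) -> tree S.
Arguments node {S}.

Inductive kruskal {S} (le : S -> S -> Prop) : tree S -> tree S -> Prop :=
| kr_sub : forall s a ts t, In t ts -> kruskal le s t -> kruskal le s (node a ts)
| kr_root : forall b ss a ts, le b a -> emb (kruskal le) ss ts ->
    kruskal le (node b ss) (node a ts).

Inductive subtree {S} : tree S -> tree S -> Prop :=
| st_refl : forall t, subtree t t
| st_child : forall s a ts t, In t ts -> subtree s t -> subtree s (node a ts).

Definition tree_UV {S} (U : S -> Prop) (V : list (tree S) -> Prop) : tree S -> Prop :=
  fun t => match t with node a w => U a /\ V w end.

Definition diamond {S} (P : tree S -> Prop) : tree S -> Prop :=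
  fun t => exists s, subtree s t /\ P s.

Definition up_kruskal {S} (theta : topo S) (P : tree S -> Prop) : tree S -> Prop :=
  fun t => exists s, P s /\ kruskal (spec_le theta) s t.

Definition tree_condition {S} (theta : topo S) (t : topo (tree S)) : Prop :=
  forall U V, theta U -> subword_topology t V -> t (diamond (tree_UV U V)).

Definition is_tree_topology {S} (theta : topo S) (t : topo (tree S)) : Prop :=
  is_topology t /\ tree_condition theta t /\
  forall t', is_topology t' -> tree_condition theta t' -> topo_le t t'.

Definition K_map {S} (theta : topo S) (t : topo (tree S)) : topo (tree S) :=
  gen (fun W => exists U V, theta U /\ subword_topology t V /\
          set_eq W (up_kruskal theta (tree_UV U V))).

From Stdlib Require Import List Classical ClassicalEpsilon FunctionalExtensionality PropExtensionality Arith Lia Wf_nat.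
Import ListNotations.

(* The least fixed point of K exists as the meet of all K-closed topologies (Knaster-Tarski).
   Every open set of a topology K(tau) is upward closed for Kruskal's embedding, so at a fixed
   point the generators up(U<V>) coincide with the sets diamond(U<V>): fixed points satisfy the
   defining condition of the tree topology, and conversely the meet of the least fixed point
   with any topology satisfying that condition is K-closed. Restriction to a closed set H
   commutes with K because H, being closed for tau <= K(tau), is downward closed for the
   embedding.
   For Noetherianity, a topology is Noetherian iff it is good: every sequence x_n in U_n
   has x_j in U_i for some i < j. Goodness passes from a family of sets to the topology it
   generates and from tau to the subword topology by Nash-Williams' minimal bad sequence
   argument (as in Higman's lemma), and to the generators of K(tau) by Ramsey's theorem. *)

Lemma set_ext {X} (A B : X -> Prop) : set_eq A B -> A = B.
Proof.
  intros H. apply functional_extensionality; intros x.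
  apply propositional_extensionality, H.
Qed.

Lemma topo_ext {X} (t1 t2 : topo X) : topo_eq t1 t2 -> t1 = t2.
Proof.
  intros H. apply functional_extensionality; intros U.
  apply propositional_extensionality, H.
Qed.

Lemma topo_le_antisym {X} (t1 t2 : topo X) : topo_le t1 t2 -> topo_le t2 t1 -> t1 = t2.
Proof. intros H12 H21. apply topo_ext; intros U; split; auto. Qed.

Lemma gen_topology {X} (G : (X -> Prop) -> Prop) : is_topology (gen G).
Proof.
  split; [|split].
  - intros t Ht _. apply Ht.
  - intros A B HA HB t Ht HG. apply Ht; [apply HA | apply HB]; auto.
  - intros F HF t Ht HG. apply Ht. intros U HU. apply HF; auto.
Qed.

Lemma gen_least {X} (G : (X -> Prop) -> Prop) (t : topo X) :
  is_topology t -> (forall V, G V -> t V) -> topo_le (gen G) t.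
Proof. intros Ht HG U HU. apply HU; auto. Qed.

Lemma gen_generator {X} (G : (X -> Prop) -> Prop) V : G V -> gen G V.
Proof. intros HV t _ HG. auto. Qed.

Lemma inter_topology {X} (t1 t2 : topo X) :
  is_topology t1 -> is_topology t2 -> is_topology (fun O => t1 O /\ t2 O).
Proof.
  intros [T1 [I1 U1]] [T2 [I2 U2]]. split; [|split].
  - auto.
  - intros A B [] []; auto.
  - intros F HF. split; [apply U1 | apply U2]; intros U HU; apply HF; auto.
Qed.

Definition up_closed {X} (le : X -> X -> Prop) (U : X -> Prop) : Prop :=
  forall x y, le x y -> U x -> U y.

Lemma up_closed_topology {X} (le : X -> X -> Prop) : is_topology (up_closed le).
Proof.
  split; [|split].
  - intros x y _ _. auto.
  - intros A B HA HB x y Hxy [Ax Bx]. split; eauto.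
  - intros F HF x y Hxy [U [HU Ux]]. exists U. split; [auto | eapply HF; eauto].
Qed.

Lemma spec_le_refl {X} (t : topo X) x : spec_le t x x.
Proof. intros U _ Ux. exact Ux. Qed.

Lemma spec_le_trans {X} (t : topo X) x y z : spec_le t x y -> spec_le t y z -> spec_le t x z.
Proof. intros Hxy Hyz U HU Ux. exact (Hyz U HU (Hxy U HU Ux)). Qed.

Lemma emb_refl {A} (R : A -> A -> Prop) l : (forall x, In x l -> R x x) -> emb R l l.
Proof.
  induction l as [|a l IH]; intros H; constructor.
  - apply H; left; reflexivity.
  - apply IH. intros x Hx; apply H; right; exact Hx.
Qed.

Lemma emb_compose {A B C} (R1 : A -> B -> Prop) (R2 : B -> C -> Prop) (R3 : A -> C -> Prop) a b c :
  (forall x y z, In x a -> In z c -> R1 x y -> R2 y z -> R3 x z) ->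
  emb R1 a b -> emb R2 b c -> emb R3 a c.
Proof.
  intros Htr Hab Hbc. revert a Hab Htr.
  induction Hbc as [c | y b z c Hyz Hbc IH | b z c Hbc IH]; intros a Hab Htr.
  - inversion Hab; constructor.
  - inversion Hab as [| x a' y' b' Hxy Hab' | a' y' b' Hab']; subst.
    + constructor.
    + apply emb_cons.
      * eapply Htr; eauto; left; reflexivity.
      * apply IH; auto. intros; eapply Htr; eauto; right; assumption.
    + apply emb_skip, IH; auto. intros; eapply Htr; eauto; right; assumption.
  - apply emb_skip, IH; auto. intros; eapply Htr; eauto; right; assumption.
Qed.

Lemma emb_In {A B} (R : A -> B -> Prop) u w :
  emb R u w -> forall x, In x u -> exists y, In y w /\ R x y.
Proof.
  induction 1 as [w | a u b w Hab _ IH | u b w _ IH]; intros x Hx.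
  - destruct Hx.
  - destruct Hx as [<- | Hx]; [exists b; split; [left|]; auto |].
    destruct (IH x Hx) as [y [Hy Hxy]]. exists y. split; [right|]; auto.
  - destruct (IH x Hx) as [y [Hy Hxy]]. exists y. split; [right|]; auto.
Qed.

Lemma emb_app_l {A B} (R : A -> B -> Prop) u w1 w : emb R u w -> emb R u (w1 ++ w).
Proof. intros H. induction w1; simpl; [exact H | apply emb_skip; exact IHw1]. Qed.

Lemma emb_cons_inv {A B} (R : A -> B -> Prop) a u w :
  emb R (a :: u) w -> exists w1 b w2, w = w1 ++ b :: w2 /\ R a b /\ emb R u w2.
Proof.
  induction w as [|c w IH]; intros H; inversion H as [| a' u' c' w' Hac Hu | u' c' w' Hw]; subst.
  - exists [], c, w. auto.
  - destruct (IH Hw) as [w1 [b [w2 [-> Hb]]]]. exists (c :: w1), b, w2. auto.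
Qed.

Lemma emb_up_closed {A} (le : A -> A -> Prop) (Us : list (A -> Prop)) :
  (forall U, In U Us -> up_closed le U) -> up_closed (emb le) (subword_basic Us).
Proof.
  intros HUs w w' Hww' Hw. unfold subword_basic in *.
  eapply emb_compose; [| exact Hw | exact Hww']. intros U x y HU _ Ux Hxy. eapply HUs; eauto.
Qed.

Lemma subword_topology_mono {A} (t1 t2 : topo A) :
  topo_le t1 t2 -> topo_le (subword_topology t1) (subword_topology t2).
Proof.
  intros H. apply gen_least; [apply gen_topology |].
  intros V [Us [HUs HV]]. apply gen_generator. exists Us. auto.
Qed.

Lemma subword_topology_up_closed {A} (le : A -> A -> Prop) (t : topo A) :
  topo_le t (up_closed le) -> topo_le (subword_topology t) (up_closed (emb le)).
Proof.
  intros H. apply gen_least; [apply up_closed_topology |].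
  intros V [Us [HUs HV]] w w' Hww' Hw.
  apply HV. apply HV in Hw. eapply emb_up_closed; eauto.
Qed.

Lemma tree_children_ind {S} (P : tree S -> Prop) :
  (forall a ts, (forall t, In t ts -> P t) -> P (node a ts)) -> forall t, P t.
Proof.
  intros IH. fix F 1. intros [a ts]. apply IH.
  induction ts as [|c ts IHts]; intros u Hu; [destruct Hu |].
  destruct Hu as [<- | Hu]; [apply F | apply IHts, Hu].
Qed.

Section Kruskal.
Context {S : Type} (le : S -> S -> Prop).
Hypothesis le_refl : forall a, le a a.
Hypothesis le_trans : forall a b c, le a b -> le b c -> le a c.

Lemma kruskal_refl t : kruskal le t t.
Proof.
  induction t as [a ts IH] using tree_children_ind.
  apply kr_root; [apply le_refl | apply emb_refl, IH].
Qed.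

Lemma kruskal_trans s t u : kruskal le s t -> kruskal le t u -> kruskal le s u.
Proof.
  revert s t. induction u as [a ts IH] using tree_children_ind.
  intros s t Hst Htu. inversion Htu as [t' a' ts' c Hc Htc | b ss a' ts' Hba Hss]; subst.
  - eapply kr_sub; [exact Hc | eapply IH; eauto].
  - inversion Hst as [s' b' ss' t' Ht' Hst' | c rs b' ss' Hcb Hrs]; subst.
    + destruct (emb_In _ _ _ Hss t' Ht') as [y [Hy Hty]].
      eapply kr_sub; [exact Hy | eapply IH; eauto].
    + apply kr_root; [eauto |].
      eapply emb_compose; [| exact Hrs | exact Hss]. intros x y z _ Hz. apply IH, Hz.
Qed.

Lemma subtree_kruskal s t : subtree s t -> kruskal le s t.
Proof. induction 1; [apply kruskal_refl | eapply kr_sub; eauto]. Qed.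

Lemma kruskal_child a ts t : In t ts -> kruskal le t (node a ts).
Proof. intros Ht. eapply kr_sub; [exact Ht | apply kruskal_refl]. Qed.
End Kruskal.

Section LeastFixedPoint.
Context {X : Type} (K : topo X -> topo X).
Hypothesis K_topology : forall t, is_topology (K t).
Hypothesis K_mono : forall t1 t2, topo_le t1 t2 -> topo_le (K t1) (K t2).

Definition prefixed_meet : topo X :=
  fun O => forall t, is_topology t -> topo_le (K t) t -> t O.

Lemma prefixed_meet_topology : is_topology prefixed_meet.
Proof.
  split; [|split].
  - intros t Ht _. apply Ht.
  - intros A B HA HB t Ht HKt. apply Ht; [apply HA | apply HB]; auto.
  - intros F HF t Ht HKt. apply Ht. intros U HU. apply HF; auto.
Qed.

Lemma prefixed_meet_least t : is_topology t -> topo_le (K t) t -> topo_le prefixed_meet t.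
Proof. intros Ht HKt U HU. apply HU; auto. Qed.

Lemma prefixed_meet_fixed : topo_eq (K prefixed_meet) prefixed_meet.
Proof.
  assert (Hpre : topo_le (K prefixed_meet) prefixed_meet).
  { intros U HU t Ht HKt. apply HKt. eapply K_mono; [| exact HU].
    apply prefixed_meet_least; auto. }
  intros U; split; [apply Hpre |].
  intros HU. apply HU; [apply K_topology | apply K_mono, Hpre].
Qed.

Lemma prefixed_meet_lfp : least_fixed_point K prefixed_meet.
Proof.
  split; [apply prefixed_meet_topology | split; [apply prefixed_meet_fixed |]].
  intros t Ht Hfix. apply prefixed_meet_least; auto. intros U HU. apply Hfix, HU.
Qed.

Lemma least_fixed_point_unique t1 t2 :
  least_fixed_point K t1 -> least_fixed_point K t2 -> t1 = t2.
Proof.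
  intros [Ht1 [Hfix1 Hleast1]] [Ht2 [Hfix2 Hleast2]].
  apply topo_le_antisym; [apply Hleast1 | apply Hleast2]; auto.
Qed.
End LeastFixedPoint.

(** * The map K and the tree topology *)

Section TreeTopology.
Context {S : Type} (theta : topo S).
Local Notation kle := (kruskal (spec_le theta)).
Local Notation K := (K_map theta).

Lemma kle_trans s t u : kle s t -> kle t u -> kle s u.
Proof. apply kruskal_trans, spec_le_trans. Qed.

Lemma K_map_topology t : is_topology (K t).
Proof. apply gen_topology. Qed.

Lemma K_map_mono t1 t2 : topo_le t1 t2 -> topo_le (K t1) (K t2).
Proof.
  intros H. apply gen_least; [apply gen_topology |].
  intros W [U [V [HU [HV HW]]]]. apply gen_generator.
  exists U, V. split; [exact HU | split; [eapply subword_topology_mono; eauto | exact HW]].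
Qed.

Lemma K_map_up_closed t : topo_le (K t) (up_closed kle).
Proof.
  apply gen_least; [apply up_closed_topology |].
  intros W [U [V [HU [HV HW]]]] x y Hxy Hx.
  apply HW in Hx. apply HW. destruct Hx as [s [Hs Hsx]].
  exists s. split; [exact Hs | eapply kle_trans; eauto].
Qed.

Lemma diamond_tree_UV U V : theta U -> up_closed (emb kle) V ->
  set_eq (diamond (tree_UV U V)) (up_kruskal theta (tree_UV U V)).
Proof.
  intros HU HV x. split.
  - intros [s [Hs HUV]]. exists s.
    split; [exact HUV | apply subtree_kruskal; [apply spec_le_refl | exact Hs]].
  - intros [s [HUV Hsx]]. revert HUV. induction Hsx as [s a ts t Ht _ IH | b ss a ts Hba Hss]; intros HUV.
    + destruct (IH HUV) as [u [Hu Hu']]. exists u. split; [eapply st_child; eauto | exact Hu'].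
    + exists (node a ts). split; [constructor |]. destruct HUV as [Hb Hw].
      split; [apply Hba; auto | eapply HV; eauto].
Qed.

Lemma subword_up_closed_of_le_K tau :
  topo_le tau (K tau) -> topo_le (subword_topology tau) (up_closed (emb kle)).
Proof.
  intros HK. apply subword_topology_up_closed.
  intros O HO. apply (K_map_up_closed tau), HK, HO.
Qed.

Lemma fixed_point_tree_condition tau : topo_eq (K tau) tau -> tree_condition theta tau.
Proof.
  intros Hfix U V HU HV. apply (proj1 (Hfix _)), gen_generator.
  exists U, V. split; [exact HU | split; [exact HV |]].
  apply diamond_tree_UV; [exact HU |].
  apply (subword_up_closed_of_le_K tau); [intros O HO; apply Hfix, HO | exact HV].
Qed.

Definition tree_topology : topo (tree S) := prefixed_meet K.

Lemma tree_topology_lfp : least_fixed_point K tree_topology.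
Proof. apply prefixed_meet_lfp; [apply K_map_topology | apply K_map_mono]. Qed.

(* Meeting the least fixed point with a topology satisfying the tree condition gives a
   K-closed topology, hence one containing the least fixed point. *)
Lemma tree_topology_is_tree_topology : is_tree_topology theta tree_topology.
Proof.
  destruct tree_topology_lfp as [Hmu [Hfix _]].
  split; [exact Hmu | split; [apply fixed_point_tree_condition, Hfix |]].
  intros t Ht Hcond.
  set (meet := fun O => tree_topology O /\ t O).
  assert (Hmeet_mu : topo_le meet tree_topology) by (intros O []; auto).
  assert (Hmeet_t : topo_le meet t) by (intros O []; auto).
  assert (Hpre : topo_le (K meet) meet).
  { intros O HO. split.
    - apply (proj1 (Hfix O)), (K_map_mono meet); [exact Hmeet_mu | exact HO].
    - revert O HO. apply gen_least; [exact Ht |].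
      intros W [U [V [HU [HV HW]]]].
      replace W with (diamond (tree_UV U V)).
      + apply Hcond; [exact HU | eapply subword_topology_mono; [exact Hmeet_t | exact HV]].
      + apply set_ext. intros x. rewrite (HW x). apply diamond_tree_UV; [exact HU |].
        apply (subword_up_closed_of_le_K tree_topology).
        * intros O HO. apply (proj2 (Hfix O)), HO.
        * eapply subword_topology_mono; [exact Hmeet_mu | exact HV]. }
  intros O HO. apply Hmeet_t.
  apply (prefixed_meet_least K); [apply inter_topology; auto | exact Hpre | exact HO].
Qed.

Lemma tree_topology_unique t1 t2 :
  is_tree_topology theta t1 -> is_tree_topology theta t2 -> t1 = t2.
Proof.
  intros [Ht1 [Hcond1 Hleast1]] [Ht2 [Hcond2 Hleast2]].
  apply topo_le_antisym; [apply Hleast1 | apply Hleast2]; auto.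
Qed.
End TreeTopology.

(** * Restriction to a closed set *)

Definition trace_of {X} (t : topo X) (H : X -> Prop) : topo X :=
  fun O => exists O', t O' /\ forall x, H x -> (O x <-> O' x).

Lemma trace_of_topology {X} (t : topo X) (H : X -> Prop) :
  is_topology t -> is_topology (trace_of t H).
Proof.
  intros [HT [HI HU]]. split; [|split].
  - exists (fun _ => True). split; [exact HT | tauto].
  - intros A B [A' [HA' HAA']] [B' [HB' HBB']].
    exists (fun x => A' x /\ B' x). split; [auto |].
    intros x Hx. rewrite HAA', HBB' by exact Hx. tauto.
  - intros F HF.
    exists (fun x => exists U', (t U' /\ exists A, F A /\ forall y, H y -> (A y <-> U' y)) /\ U' x).
    split; [apply HU; intros U' []; auto |].
    intros x Hx. split.
    + intros [A [HA Ax]]. destruct (HF A HA) as [A' [HA' HAA']].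
      exists A'. split; [split; [exact HA' | exists A; auto] | apply HAA'; auto].
    + intros [U' [[_ [A [HA HAU']]] U'x]]. exists A. split; [exact HA | apply HAU'; auto].
Qed.

Lemma restr_le_of_trace {X} (t1 t2 : topo X) (H : X -> Prop) :
  topo_le t1 (trace_of t2 H) -> topo_le (restr t1 H) (restr t2 H).
Proof.
  intros Htr. apply gen_least; [apply gen_topology |].
  intros W [O [HO HW]]. destruct (Htr O HO) as [O' [HO' HOO']].
  apply gen_generator. exists O'. split; [exact HO' |].
  intros x. rewrite (HW x). split; intros [Ox Hx]; split; auto; apply HOO'; auto.
Qed.

Lemma le_trace_restr {X} (t : topo X) (H : X -> Prop) : topo_le t (trace_of (restr t H) H).
Proof.
  intros O HO. exists (fun x => O x /\ H x). split; [| intros x Hx; tauto].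
  apply gen_generator. exists O. split; [exact HO | intros x; tauto].
Qed.

Lemma restr_le_trace {X} (t : topo X) (H : X -> Prop) :
  is_topology t -> topo_le (restr t H) (trace_of t H).
Proof.
  intros Ht. apply gen_least; [apply trace_of_topology, Ht |].
  intros W [O [HO HW]]. exists O. split; [exact HO |]. intros x Hx. rewrite (HW x). tauto.
Qed.

Lemma subword_basic_trace_impl {X} (H : X -> Prop) Us Us' w :
  Forall2 (fun U U' => forall x, H x -> U x -> U' x) Us Us' ->
  (forall y, In y w -> H y) -> subword_basic Us w -> subword_basic Us' w.
Proof.
  unfold subword_basic. intros HUs Hw He. revert Us' HUs.
  induction He as [w | U Us a w HUa He IH | Us a w He IH]; intros Us' HUs;
    inversion HUs as [| U0 U' Us0 Us'' HUU' HUs']; subst.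
  - constructor.
  - constructor.
    + apply HUU'; [apply Hw; left; reflexivity | exact HUa].
    + apply IH; [intros y Hy; apply Hw; right; exact Hy | exact HUs'].
  - constructor.
  - apply emb_skip, IH; [intros y Hy; apply Hw; right; exact Hy | exact HUs].
Qed.

Lemma subword_basic_trace {X} (H : X -> Prop) Us Us' w :
  Forall2 (fun U U' => forall x, H x -> (U x <-> U' x)) Us Us' ->
  (forall y, In y w -> H y) -> (subword_basic Us w <-> subword_basic Us' w).
Proof.
  intros HUs Hw. split; apply subword_basic_trace_impl with H; auto.
  - eapply Forall2_impl; [| exact HUs]. intros U U' HUU' x Hx. apply HUU', Hx.
  - apply Forall2_flip. eapply Forall2_impl; [| exact HUs]. intros U U' HUU' x Hx. apply HUU', Hx.
Qed.

Lemma subword_topology_trace {X} (t1 t2 : topo X) (H : X -> Prop) :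
  topo_le t1 (trace_of t2 H) ->
  topo_le (subword_topology t1) (trace_of (subword_topology t2) (fun w => forall y, In y w -> H y)).
Proof.
  intros Htr. apply gen_least; [apply trace_of_topology, gen_topology |].
  intros V [Us [HUs HV]].
  assert (exists Us', (forall U', In U' Us' -> t2 U') /\
            Forall2 (fun U U' => forall x, H x -> (U x <-> U' x)) Us Us') as [Us' [HUs' Htrace]].
  { clear HV. induction Us as [|U Us IH].
    - exists []. split; [intros U [] | constructor].
    - destruct IH as [Us' [HUs' Htrace]]; [intros U' HU'; apply HUs; right; exact HU' |].
      destruct (Htr U) as [U' [HU' HUU']]; [apply HUs; left; reflexivity |].
      exists (U' :: Us'). split; [intros V' [<- | HV']; auto | constructor; auto]. }
  exists (subword_basic Us'). split.
  - apply gen_generator. exists Us'. split; [exact HUs' | intros w; tauto].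
  - intros w Hw. rewrite (HV w). apply subword_basic_trace with H; auto.
Qed.

Section Restriction.
Context {S : Type} (theta : topo S).
Local Notation kle := (kruskal (spec_le theta)).

Lemma K_map_trace (t1 t2 : topo (tree S)) (H : tree S -> Prop) :
  (forall s x, kle s x -> H x -> H s) ->
  topo_le t1 (trace_of t2 H) -> topo_le (K_map theta t1) (trace_of (K_map theta t2) H).
Proof.
  intros Hdown Htr. apply gen_least; [apply trace_of_topology, gen_topology |].
  intros W [U [V [HU [HV HW]]]].
  destruct (subword_topology_trace _ _ _ Htr V HV) as [V' [HV' HVV']].
  exists (up_kruskal theta (tree_UV U V')). split.
  - apply gen_generator. exists U, V'. split; [exact HU | split; [exact HV' | intros x; tauto]].
  - intros x Hx. rewrite (HW x).
    assert (Hchildren : forall a ss, kle (node a ss) x -> forall y, In y ss -> H y).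
    { intros a ss Hax y Hy. apply (Hdown y x); [| exact Hx].
      eapply kle_trans; [apply kruskal_child, Hy; apply spec_le_refl | exact Hax]. }
    split; intros [[a ss] [[Ha Hss] Hax]]; exists (node a ss);
      (split; [split; [exact Ha | apply (HVV' ss); eauto] | exact Hax]).
Qed.

(* A closed set of [t] is the complement of an open set of [K t], hence downward closed
   for Kruskal's embedding. *)
Lemma K_map_restr (t : topo (tree S)) (H : tree S -> Prop) :
  is_topology t -> topo_le t (K_map theta t) -> closed_in t H ->
  topo_eq (restr (K_map theta t) H) (restr (K_map theta (restr t H)) H).
Proof.
  intros Ht HtK Hclosed.
  assert (Hdown : forall s x, kle s x -> H x -> H s).
  { intros s x Hsx Hx. apply NNPP. intros Hs.
    exact (K_map_up_closed theta t _ (HtK _ Hclosed) s x Hsx Hs Hx). }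
  intros O. split; revert O; apply restr_le_of_trace, K_map_trace; auto.
  - apply le_trace_restr.
  - apply restr_le_trace, Ht.
Qed.
End Restriction.

(** * Ramsey's theorem and minimal bad sequences *)

Definition almost_full {D} (P : D -> Prop) (R : D -> D -> Prop) : Prop :=
  forall f : nat -> D, (forall n, P (f n)) -> exists i j, i < j /\ R (f i) (f j).

Definition strictly_increasing (f : nat -> nat) : Prop := forall n, f n < f (S n).

Lemma strictly_increasing_lt f : strictly_increasing f -> forall i j, i < j -> f i < f j.
Proof. intros Hf i j Hij. induction Hij as [| j Hij IH]; [apply Hf | specialize (Hf j); lia]. Qed.

Lemma strictly_increasing_ge f : strictly_increasing f -> forall n, f 0 + n <= f n.
Proof. intros Hf n. induction n as [| n IH]; [lia | specialize (Hf n); lia]. Qed.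

Definition infinite (I : nat -> Prop) : Prop := forall N, exists n, N <= n /\ I n.

Lemma infinite_enum I : infinite I -> exists g, strictly_increasing g /\ forall n, I (g n).
Proof.
  intros HI. destruct (choice _ HI) as [above Habove].
  exists (fix g n := match n with 0 => above 0 | S n => above (S (g n)) end). split.
  - intros n. apply Habove.
  - intros [| n]; apply Habove.
Qed.

Lemma homogeneous_of_predictive (A : nat -> nat -> Prop) (pt : nat -> nat) (col : nat -> Prop) :
  (forall l l', l < l' ->
     pt l < pt l' /\ (col l -> A (pt l) (pt l')) /\ (~ col l -> ~ A (pt l) (pt l'))) ->
  exists f, strictly_increasing f /\
    ((forall i j, i < j -> A (f i) (f j)) \/ (forall i j, i < j -> ~ A (f i) (f j))).
Proof.
  intros Hpt. destruct (classic (infinite col)) as [Hinf | Hfin].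
  - destruct (infinite_enum _ Hinf) as [g [Hg Hcol]].
    exists (fun n => pt (g n)). split.
    + intros n. apply Hpt, Hg.
    + left. intros i j Hij. apply Hpt; [apply strictly_increasing_lt; auto | apply Hcol].
  - apply not_all_ex_not in Hfin. destruct Hfin as [N HN].
    exists (fun n => pt (N + n)). split.
    + intros n. apply Hpt. lia.
    + right. intros i j Hij. apply Hpt; [lia |].
      intros Hcol. apply HN. exists (N + i). split; [lia | exact Hcol].
Qed.

Lemma ramsey_step (A : nat -> nat -> Prop) (I : nat -> Prop) : infinite I ->
  exists k J, I k /\ infinite J /\ (forall j, J j -> I j /\ k < j) /\
    ((forall j, J j -> A k j) \/ (forall j, J j -> ~ A k j)).
Proof.
  intros HI. destruct (HI 0) as [k [_ Hk]]. exists k.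
  destruct (classic (infinite (fun j => I j /\ k < j /\ A k j))) as [HA | HnA].
  - exists (fun j => I j /\ k < j /\ A k j).
    split; [exact Hk | split; [exact HA | split; [intros j [? [? _]]; auto |]]].
    left. intros j [_ [_ Hj]]. exact Hj.
  - apply not_all_ex_not in HnA. destruct HnA as [N HN].
    exists (fun j => I j /\ k < j /\ ~ A k j).
    split; [exact Hk | split; [| split; [intros j [? [? _]]; auto |]]].
    + intros M. destruct (HI (M + N + S k)) as [n [Hn Hin]]. exists n.
      split; [lia | split; [exact Hin | split; [lia |]]].
      intros HAkn. apply HN. exists n. split; [lia | split; [exact Hin | split; [lia | exact HAkn]]].
    + right. intros j [_ [_ Hj]]. exact Hj.
Qed.

Lemma ramsey (A : nat -> nat -> Prop) : exists f, strictly_increasing f /\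
  ((forall i j, i < j -> A (f i) (f j)) \/ (forall i j, i < j -> ~ A (f i) (f j))).
Proof.
  destruct (choice (fun (I : nat -> Prop) (p : nat * (nat -> Prop)) => infinite I ->
      I (fst p) /\ infinite (snd p) /\ (forall j, snd p j -> I j /\ fst p < j) /\
      ((forall j, snd p j -> A (fst p) j) \/ (forall j, snd p j -> ~ A (fst p) j))))
    as [next Hnext].
  { intros I. destruct (classic (infinite I)) as [HI | HI].
    - destruct (ramsey_step A I HI) as [k [J HkJ]]. exists (k, J). intros _. exact HkJ.
    - exists (0, I). intros HI'. contradiction. }
  set (Is := fix Is n := match n with 0 => fun _ => True | S n => snd (next (Is n)) end).
  assert (Hinf : forall n, infinite (Is n)).
  { induction n as [| n IH]; [intros N; exists N; split; [lia | exact I] | apply (Hnext _ IH)]. }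
  assert (Hsub : forall l d j, Is (l + d) j -> Is l j).
  { intros l d. induction d as [| d IH]; intros j Hj; [rewrite Nat.add_0_r in Hj; exact Hj |].
    rewrite Nat.add_succ_r in Hj. destruct (Hnext _ (Hinf (l + d))) as [_ [_ [Hdesc _]]].
    apply IH, (Hdesc j Hj). }
  apply (homogeneous_of_predictive A (fun n => fst (next (Is n)))
           (fun n => forall j, snd (next (Is n)) j -> A (fst (next (Is n))) j)).
  intros l l' Hll'.
  assert (Hl' : snd (next (Is l)) (fst (next (Is l')))).
  { apply (Hsub (S l) (l' - S l)). replace (S l + (l' - S l)) with l' by lia.
    exact (proj1 (Hnext _ (Hinf l'))). }
  destruct (Hnext _ (Hinf l)) as [_ [_ [Hdesc Hcol]]].
  split; [apply Hdesc, Hl' | split; [intros HA; apply HA, Hl' |]].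
  intros HnA. destruct Hcol as [HA | HnA']; [contradiction | apply HnA', Hl'].
Qed.

Lemma ramsey_common_pair (A B : nat -> nat -> Prop) :
  (forall f, strictly_increasing f -> exists i j, i < j /\ A (f i) (f j)) ->
  (forall f, strictly_increasing f -> exists i j, i < j /\ B (f i) (f j)) ->
  exists i j, i < j /\ A i j /\ B i j.
Proof.
  intros HA HB. destruct (ramsey A) as [f [Hf [HallA | HnoA]]].
  - destruct (HB f Hf) as [i [j [Hij HBij]]].
    exists (f i), (f j). split; [apply strictly_increasing_lt; auto | auto].
  - destruct (HA f Hf) as [i [j [Hij HAij]]]. exfalso. exact (HnoA i j Hij HAij).
Qed.

Section MinimalBadSequence.
Context {D : Type} (valid : D -> Prop) (rel : D -> D -> Prop) (size : D -> nat).

Definition bad (h : nat -> D) : Prop :=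
  (forall n, valid (h n)) /\ forall i j, i < j -> ~ rel (h i) (h j).

Lemma exists_min_size (P : D -> Prop) :
  (exists d, P d) -> exists d, P d /\ forall d', P d' -> size d <= size d'.
Proof.
  intros [d Hd].
  destruct (dec_inh_nat_subset_has_unique_least_element (fun n => exists d, P d /\ size d = n))
    as [n [[[d' [Hd' <-]] Hmin] _]].
  - intros n. apply classic.
  - exists (size d), d. auto.
  - exists d'. split; [exact Hd' |]. intros d'' Hd''. apply Hmin. exists d''. auto.
Qed.

Lemma not_almost_full_bad : ~ almost_full valid rel -> exists f, bad f.
Proof.
  intros Hnaf. apply not_all_ex_not in Hnaf. destruct Hnaf as [f Hf].
  apply imply_to_and in Hf. destruct Hf as [Hvalid Hnorel].
  exists f. split; [exact Hvalid |]. intros i j Hij Hrel. apply Hnorel. exists i, j. auto.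
Qed.

Definition extends (l : list D) (d : D) : Prop :=
  exists h, bad h /\ (forall k, k < length l -> h k = nth k l d) /\ h (length l) = d.

(* Nash-Williams: choose each term of minimal size among all bad continuations of the
   terms chosen so far. *)
Lemma minimal_bad_sequence : ~ almost_full valid rel ->
  exists g, bad g /\
    forall n h, bad h -> (forall k, k < n -> h k = g k) -> size (g n) <= size (h n).
Proof.
  intros Hnaf. destruct (not_almost_full_bad Hnaf) as [f Hf].
  destruct (choice (fun l d => (exists d', extends l d') ->
              extends l d /\ forall d', extends l d' -> size d <= size d')) as [next Hnext].
  { intros l. destruct (classic (exists d', extends l d')) as [Hex | Hnex].
    - destruct (exists_min_size _ Hex) as [d Hd]. exists d. intros _. exact Hd.
    - exists (f 0). intros Hex. contradiction. }
  set (pre := fix pre n := match n with 0 => [] | S n => pre n ++ [next (pre n)] end).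
  set (g := fun n => next (pre n)).
  assert (Hlen : forall n, length (pre n) = n).
  { induction n as [| n IH]; [reflexivity | simpl; rewrite length_app, IH; simpl; lia]. }
  assert (Hnth : forall n k d, k < n -> nth k (pre n) d = g k).
  { induction n as [| n IH]; intros k d Hk; [lia |]. simpl.
    destruct (Nat.eq_dec k n) as [-> | Hkn].
    - rewrite app_nth2, Hlen, Nat.sub_diag by (rewrite Hlen; lia). reflexivity.
    - rewrite app_nth1 by (rewrite Hlen; lia). apply IH. lia. }
  assert (Hext : forall n, extends (pre n) (g n)).
  { induction n as [| n IH]; apply Hnext.
    - exists (f 0), f. split; [exact Hf | split; [simpl; lia | reflexivity]].
    - destruct IH as [h [Hh [Hagree Hlast]]]. rewrite Hlen in Hagree, Hlast.
      exists (h (S n)), h. split; [exact Hh |]. rewrite Hlen. split; [| reflexivity].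
      intros k Hk. rewrite Hnth by exact Hk.
      destruct (Nat.eq_dec k n) as [-> | Hkn]; [exact Hlast |].
      rewrite Hagree, Hnth by lia. reflexivity. }
  exists g. split; [split |].
  - intros n. destruct (Hext n) as [h [[Hvalid _] [_ Hlast]]].
    rewrite Hlen in Hlast. rewrite <- Hlast. apply Hvalid.
  - intros i j Hij. destruct (Hext j) as [h [[_ Hh] [Hagree Hlast]]]. rewrite Hlen in *.
    rewrite <- Hlast, <- (Hnth j i (g j) Hij), <- Hagree by exact Hij. apply Hh, Hij.
  - intros n h Hh Hagree. apply (Hnext (pre n) (ex_intro _ _ (Hext n))).
    exists h. split; [exact Hh |]. rewrite Hlen. split; [| reflexivity].
    intros k Hk. rewrite Hnth by exact Hk. apply Hagree, Hk.
Qed.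
End MinimalBadSequence.

(* The abstract form of the minimal bad sequence argument: an element that is not below
   everything splits into a head, from an almost full relation, and a strictly smaller tail. *)
Lemma almost_full_of_decomposition {D E} (valid : D -> Prop) (rel : D -> D -> Prop)
  (size : D -> nat) (validE : E -> Prop) (relE : E -> E -> Prop) (dec : D -> E -> D -> Prop) :
  almost_full validE relE ->
  (forall d, valid d -> (forall d', rel d d') \/ exists hd tl, dec d hd tl) ->
  (forall d hd tl, valid d -> dec d hd tl ->
     validE hd /\ valid tl /\ size tl < size d /\ forall d', rel d' tl -> rel d' d) ->
  (forall d hd tl d' hd' tl', dec d hd tl -> dec d' hd' tl' ->
     relE hd hd' -> rel tl tl' -> rel d d') ->
  almost_full valid rel.
Proof.
  intros HE Hsplit Hdec Hcompat. apply NNPP. intros Hnaf.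
  destruct (minimal_bad_sequence valid rel size Hnaf) as [g [[Hvalid Hbad] Hmin]].
  assert (Hparts : forall n, exists p : E * D, dec (g n) (fst p) (snd p)).
  { intros n. destruct (Hsplit (g n) (Hvalid n)) as [Htop | [hd [tl Hd]]].
    - exfalso. apply (Hbad n (S n)); auto.
    - exists (hd, tl). exact Hd. }
  destruct (choice _ Hparts) as [part Hpart].
  assert (Hpart_spec := fun n => Hdec _ _ _ (Hvalid n) (Hpart n)).
  destruct (ramsey_common_pair (fun i j => relE (fst (part i)) (fst (part j)))
                               (fun i j => rel (snd (part i)) (snd (part j))))
    as [i [j [Hij [Hhd Htl]]]].
  - intros f _. apply (HE (fun n => fst (part (f n)))). intros n. apply Hpart_spec.
  - (* Otherwise the tails along [f], grafted after [g] below [f 0], form a bad sequence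
       that beats [g] at position [f 0]. *)
    intros f Hf. apply NNPP. intros Hnotl.
    set (h := fun k => if k <? f 0 then g k else snd (part (f (k - f 0)))).
    assert (Hh : bad valid rel h).
    { split.
      - intros k. unfold h. destruct (k <? f 0); [apply Hvalid | apply Hpart_spec].
      - intros a b Hab. unfold h.
        destruct (Nat.ltb_spec a (f 0)); destruct (Nat.ltb_spec b (f 0)); try lia.
        + apply Hbad, Hab.
        + intros Hrel. apply (Hbad a (f (b - f 0))).
          * pose proof (strictly_increasing_ge f Hf (b - f 0)). lia.
          * apply (Hpart_spec (f (b - f 0))), Hrel.
        + intros Hrel. apply Hnotl. exists (a - f 0), (b - f 0). split; [lia | exact Hrel]. }
    assert (Hsmaller : size (g (f 0)) <= size (h (f 0))).
    { apply Hmin; [exact Hh |]. intros k Hk. unfold h. apply Nat.ltb_lt in Hk. rewrite Hk. reflexivity. }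
    unfold h in Hsmaller. rewrite Nat.ltb_irrefl, Nat.sub_diag in Hsmaller.
    destruct (Hpart_spec (f 0)) as [_ [_ [Hlt _]]]. lia.
  - apply (Hbad i j Hij). eapply Hcompat; eauto.
Qed.

(** * Noetherian spaces as good topologies *)

(* [good G]: whenever [x n] lies in [U n] with [U n] in [G], some [x j] lies in [U i], [i < j]. *)
Definition good {X} (G : (X -> Prop) -> Prop) : Prop :=
  almost_full (fun p : X * (X -> Prop) => G (snd p) /\ snd p (fst p)) (fun p q => snd p (fst q)).

Lemma noetherian_good {X} (t : topo X) : noetherian t -> good t.
Proof.
  intros Hnoeth f Hf.
  destruct (Hnoeth (fun y => exists n, y = fst (f n)) (fun U => exists n, U = snd (f n)))
    as [l [Hl Hcover]].
  - intros U [n ->]. apply Hf.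
  - intros y [n ->]. exists (snd (f n)). split; [exists n; reflexivity | apply Hf].
  - assert (exists N, forall U, In U l -> exists n, n < N /\ U = snd (f n)) as [N HN].
    { clear Hcover. induction l as [| U l IH].
      - exists 0. intros U [].
      - destruct IH as [N HN]; [intros V HV; apply Hl; right; exact HV |].
        destruct (Hl U (or_introl eq_refl)) as [n ->].
        exists (S (N + n)). intros V [<- | HV].
        + exists n. split; [lia | reflexivity].
        + destruct (HN V HV) as [k [Hk ->]]. exists k. split; [lia | reflexivity]. }
    destruct (Hcover (fst (f N)) (ex_intro _ N eq_refl)) as [U [HU HxU]].
    destruct (HN U HU) as [n [Hn ->]]. exists n, N. auto.
Qed.

(* A cover without finite subcover yields a sequence in which each point avoids all the
   open sets chosen before it. *)
Lemma good_noetherian {X} (t : topo X) : good t -> noetherian t.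
Proof.
  intros Hgood A F HF Hcov. apply NNPP. intros Hnfin.
  assert (Havoid : forall l, (forall U, In U l -> F U) ->
            exists x, A x /\ forall U, In U l -> ~ U x).
  { intros l Hl. apply NNPP. intros Hx. apply Hnfin. exists l. split; [exact Hl |].
    intros x Ax. apply NNPP. intros Hx2. apply Hx. exists x. split; [exact Ax |].
    intros U HU Ux. apply Hx2. exists U. auto. }
  destruct (Havoid [] (fun U H => match H with end)) as [x0 [Ax0 _]].
  assert (Hstep : forall l, exists p : X * (X -> Prop), (forall U, In U l -> F U) ->
            (forall U, In U l -> ~ U (fst p)) /\ F (snd p) /\ snd p (fst p)).
  { intros l. destruct (classic (forall U, In U l -> F U)) as [Hl | Hl].
    - destruct (Havoid l Hl) as [x [Ax Hx]]. destruct (Hcov x Ax) as [U [FU Ux]].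
      exists (x, U). intros _. auto.
    - exists (x0, fun _ => True). intros H. contradiction. }
  destruct (choice _ Hstep) as [c Hc].
  set (L := fix L n := match n with 0 => [] | S n => snd (c (L n)) :: L n end).
  assert (HL : forall n U, In U (L n) -> F U).
  { induction n as [| n IH]; intros U HU; [destruct HU |].
    destruct HU as [<- | HU]; [apply (Hc (L n) IH) | apply IH, HU]. }
  assert (HLin : forall i j, i < j -> In (snd (c (L i))) (L j)).
  { intros i j Hij. induction Hij; [left; reflexivity | right; exact IHHij]. }
  destruct (Hgood (fun n => c (L n))) as [i [j [Hij Hrel]]].
  - intros n. destruct (Hc (L n) (HL n)) as [_ [HFn Hn]]. split; [apply HF, HFn | exact Hn].
  - destruct (Hc (L j) (HL j)) as [Hj _]. exact (Hj _ (HLin i j Hij) Hrel).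
Qed.

Lemma good_finite_inters {X} (G : (X -> Prop) -> Prop) : good G ->
  almost_full (fun p : X * list (X -> Prop) => forall U, In U (snd p) -> G U /\ U (fst p))
              (fun p q => forall U, In U (snd p) -> U (fst q)).
Proof.
  intros HG.
  apply (almost_full_of_decomposition _ _ (fun p => length (snd p)) _ _
           (fun d hd tl => snd d = snd hd :: snd tl /\ fst hd = fst d /\ fst tl = fst d) HG).
  - intros [x [| U l]] _; [left; intros d' U [] | right].
    exists (x, U), (x, l). simpl. auto.
  - intros [x l] [y U] [z r] Hvalid [E1 [E2 E3]]; simpl in *; subst.
    split; [apply Hvalid; left; reflexivity |].
    split; [intros V HV; apply Hvalid; right; exact HV |].
    split; [simpl; lia |]. intros d' Hd' V HV. apply Hd', HV.
  - intros [x l] [x1 U] [x2 r] [y l'] [y1 U'] [y2 r'] [E1 [E2 E3]] [F1 [F2 F3]] HU Hr;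
      simpl in *; subst. intros W [<- | HW]; [exact HU | apply Hr, HW].
Qed.

Lemma gen_open_basic {X} (G : (X -> Prop) -> Prop) O : gen G O ->
  forall x, O x -> exists l, (forall U, In U l -> G U /\ U x) /\
                        forall y, (forall U, In U l -> U y) -> O y.
Proof.
  revert O. apply (gen_least G (fun O => forall x, O x ->
    exists l, (forall U, In U l -> G U /\ U x) /\ forall y, (forall U, In U l -> U y) -> O y)).
  1: split; [| split].
  - intros x _. exists []. split; [intros U [] | auto].
  - intros A B HA HB x [Ax Bx].
    destruct (HA x Ax) as [l1 [Hl1 HA1]], (HB x Bx) as [l2 [Hl2 HB2]].
    exists (l1 ++ l2). split.
    + intros U HU. apply in_app_iff in HU as [HU | HU]; auto.
    + intros y Hy. split; [apply HA1 | apply HB2]; intros U HU; apply Hy, in_app_iff; auto.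
  - intros F HF x [U [HU Ux]]. destruct (HF U HU x Ux) as [l [Hl HUl]].
    exists l. split; [exact Hl |]. intros y Hy. exists U. auto.
  - intros V HV x Vx. exists [V]. split.
    + intros U [<- | []]. auto.
    + intros y Hy. apply Hy. left. reflexivity.
Qed.

Lemma good_gen {X} (G : (X -> Prop) -> Prop) : good G -> good (gen G).
Proof.
  intros HG f Hf.
  assert (Hbasic : forall n, exists l, (forall U, In U l -> G U /\ U (fst (f n))) /\
                            forall y, (forall U, In U l -> U y) -> snd (f n) y).
  { intros n. destruct (Hf n) as [HO Hx]. apply gen_open_basic; auto. }
  destruct (choice _ Hbasic) as [l Hl].
  destruct (good_finite_inters G HG (fun n => (fst (f n), l n))) as [i [j [Hij Hrel]]].
  - intros n. apply Hl.
  - exists i, j. split; [exact Hij | apply Hl, Hrel].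
Qed.

Lemma higman {X} (t : topo X) : good t ->
  almost_full (fun p : list X * list (X -> Prop) =>
                 (forall U, In U (snd p) -> t U) /\ subword_basic (snd p) (fst p))
              (fun p q => subword_basic (snd p) (fst q)).
Proof.
  intros Hgood.
  apply (almost_full_of_decomposition _ _ (fun p => length (snd p)) _ _
           (fun d hd tl => (exists w1, fst d = w1 ++ fst hd :: fst tl) /\
              snd d = snd hd :: snd tl /\ snd hd (fst hd) /\ subword_basic (snd tl) (fst tl))
           Hgood).
  - intros [w [| U l]] [_ Hw]; [left; intros d'; constructor | right].
    destruct (emb_cons_inv _ _ _ _ Hw) as [w1 [x [y [-> [Ux Hy]]]]].
    exists (x, U), (y, l). simpl. eauto 6.
  - intros [w l] [x U] [y r] [HUs _] [[w1 E1] [E2 [Ux Hy]]]; simpl in *; subst.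
    split; [split; [apply HUs; left; reflexivity | exact Ux] |].
    split; [split; [intros V HV; apply HUs; right; exact HV | exact Hy] |].
    split; [simpl; lia |]. intros d' Hd'. apply emb_app_l, emb_skip, Hd'.
  - intros [w l] [x U] [y r] [w' l'] [x' U'] [y' r'] [_ [E1 _]] [[w1 E1'] [E2' _]] HU Hr;
      simpl in *; subst. apply emb_app_l, emb_cons; [exact HU | exact Hr].
Qed.

Definition subword_basics {A} (s : topo A) : (list A -> Prop) -> Prop :=
  fun W => exists Us : list (A -> Prop), (forall U, In U Us -> s U) /\ set_eq W (subword_basic Us).

Lemma subword_topology_good {X} (t : topo X) : good t -> good (subword_topology t).
Proof.
  intros Hgood. apply (good_gen (subword_basics t)). intros f Hf.
  assert (Hrep : forall n, exists Us, (forall U, In U Us -> t U) /\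
                                 set_eq (snd (f n)) (subword_basic Us)) by (intros n; apply Hf).
  destruct (choice _ Hrep) as [Us HUs].
  destruct (higman t Hgood (fun n => (fst (f n), Us n))) as [i [j [Hij Hrel]]].
  - intros n. split; [apply HUs | apply (HUs n), Hf].
  - exists i, j. split; [exact Hij | apply (HUs i), Hrel].
Qed.

Definition K_generators {S} (theta : topo S) (t : topo (tree S)) : (tree S -> Prop) -> Prop :=
  fun W => exists U V, theta U /\ subword_topology t V /\
             set_eq W (up_kruskal theta (tree_UV U V)).

(* Along a sequence of generators [up_kruskal (U n)<V n>] with witnesses [node a_n w_n],
   Ramsey's theorem finds [i < j] with [a_j] in [U i] and [w_j] in [V i]. *)
Lemma K_map_good {S} (theta : topo S) (t : topo (tree S)) :
  good theta -> good (subword_topology t) -> good (K_map theta t).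
Proof.
  intros Htheta Ht. apply (good_gen (K_generators theta t)). intros f Hf.
  assert (Hwit : forall n, exists q : (S -> Prop) * (list (tree S) -> Prop) * (S * list (tree S)),
     theta (fst (fst q)) /\ subword_topology t (snd (fst q)) /\
     set_eq (snd (f n)) (up_kruskal theta (tree_UV (fst (fst q)) (snd (fst q)))) /\
     fst (fst q) (fst (snd q)) /\ snd (fst q) (snd (snd q)) /\
     kruskal (spec_le theta) (node (fst (snd q)) (snd (snd q))) (fst (f n))).
  { intros n. destruct (Hf n) as [[U [V [HU [HV HW]]]] Hx].
    apply HW in Hx. destruct Hx as [[a w] [[Ha Hw] Hk]].
    exists (U, V, (a, w)). simpl. auto 10. }
  destruct (choice _ Hwit) as [q Hq].
  destruct (ramsey_common_pair (fun i j => fst (fst (q i)) (fst (snd (q j))))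
                               (fun i j => snd (fst (q i)) (snd (snd (q j)))))
    as [i [j [Hij [Hlabel Hword]]]].
  - intros g _. apply (Htheta (fun n => (fst (snd (q (g n))), fst (fst (q (g n)))))).
    intros n. destruct (Hq (g n)) as [HU [_ [_ [Ha _]]]]. split; assumption.
  - intros g _. apply (Ht (fun n => (snd (snd (q (g n))), snd (fst (q (g n)))))).
    intros n. destruct (Hq (g n)) as [_ [HV [_ [_ [Hw _]]]]]. split; assumption.
  - exists i, j. split; [exact Hij |].
    destruct (Hq i) as [_ [_ [HWi _]]], (Hq j) as [_ [_ [_ [_ [_ Hkj]]]]].
    apply HWi. exists (node (fst (snd (q j))) (snd (snd (q j)))). split; [split; assumption | exact Hkj].
Qed.

Lemma K_map_noetherian {S} (theta : topo S) (t : topo (tree S)) :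
  noetherian theta -> noetherian t -> noetherian (K_map theta t).
Proof.
  intros Htheta Ht. apply good_noetherian, K_map_good.
  - apply noetherian_good, Htheta.
  - apply subword_topology_good, noetherian_good, Ht.
Qed.

Theorem mainTheorem14 (Sigma : Type) (theta : topo Sigma) :
  noetherian_space theta ->
  (exists tau, is_tree_topology theta tau) /\
  (forall tau, is_tree_topology theta tau <-> least_fixed_point (K_map theta) tau) /\
  topology_expander (K_map theta).
Proof.
  intros [_ Hnoeth].
  pose proof (tree_topology_is_tree_topology theta) as Htree.
  pose proof (tree_topology_lfp theta) as Hlfp.
  split; [exists (tree_topology theta); exact Htree | split].
  - intros tau. split; intros Htau.
    + rewrite (tree_topology_unique theta tau (tree_topology theta)); auto.
    + rewrite (least_fixed_point_unique (K_map theta) tau (tree_topology theta)); auto.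
  - split; [split; [| split] |].
    + intros t _. apply K_map_topology.
    + intros t1 t2 _ _. apply K_map_mono.
    + intros t _ Ht. apply K_map_noetherian; assumption.
    + intros t H Ht _ HtK Hclosed. apply K_map_restr; assumption.
Qed.
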